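(* Let $N>0$ and $\tau\in(0,1)$, and let $(v_1,v_2)$ be a radial solution of $(P)_\tau$ (as described in the context). For every $0<r_0<R_0$ there exist a constant $C_0=C_0(\tau,N,R_0/r_0)>0$ and $\gamma=\gamma(R_0/r_0)\in(0,1)$ (depending only on the indicated quantities) such that $$\max_{[r_0,R_0]}v_1\le\gamma\min_{[r_0,R_0]}v_1+2(N+1)(\gamma-1)\log r_0+C_0,$$ $$\max_{[r_0,R_0]}v_2\le\gamma\min_{[r_0,R_0]}v_2+2(\gamma-1)\log r_0+C_0.$$
   Context: A radial solution of $(P)_\tau$ is a pair $v_1,v_2\in C([0,\infty))\cap C^2((0,\infty))$ with, for $r>0$, $$-(rv_1')'=r^{2N+1}e^{v_1}-\tau re^{v_2},\qquad -(rv_2')'=re^{v_2}-\tau r^{2N+1}e^{v_1},$$ $v_1'(0)=v_2'(0)=0$, $$\beta_1=\int_0^\infty r^{2N+1}e^{v_1}\,dr<\infty,\qquad \beta_2=\int_0^\infty re^{v_2}\,dr<\infty,$$ and $\lim_{r\to\infty}rv_1'(r)=-(\beta_1-\tau\beta_2)$, $\lim_{r\to\infty}rv_2'(r)=-(\beta_2-\tau\beta_1)$. *)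

From Stdlib Require Import Reals.
From Coquelicot Require Import Coquelicot.
Open Scope R_scope.

Definition C2_pos (v d dd : R -> R) : Prop :=
  forall r, 0 < r ->
    is_derive v r (d r) /\ is_derive d r (dd r) /\ continuous dd r.

Definition C0_nonneg (v : R -> R) : Prop :=
  filterlim v (at_right 0) (locally (v 0)) /\
  (forall r, 0 < r -> continuous v r).

Definition deriv0_zero (v : R -> R) : Prop :=
  filterlim (fun r => (v r - v 0) / r) (at_right 0) (locally 0).

Definition radial_solution (N tau : R) (v1 v2 : R -> R) : Prop :=
  C0_nonneg v1 /\ C0_nonneg v2 /\
  exists (d1 dd1 d2 dd2 : R -> R) (beta1 beta2 : R),
    C2_pos v1 d1 dd1 /\ C2_pos v2 d2 dd2 /\
    (forall r, 0 < r ->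
       - (d1 r + r * dd1 r) = Rpower r (2 * N + 1) * exp (v1 r) - tau * r * exp (v2 r)) /\
    (forall r, 0 < r ->
       - (d2 r + r * dd2 r) = r * exp (v2 r) - tau * Rpower r (2 * N + 1) * exp (v1 r)) /\
    deriv0_zero v1 /\ deriv0_zero v2 /\
    is_RInt_gen (fun r => Rpower r (2 * N + 1) * exp (v1 r))
      (at_right 0) (Rbar_locally p_infty) beta1 /\
    is_RInt_gen (fun r => r * exp (v2 r))
      (at_right 0) (Rbar_locally p_infty) beta2 /\
    filterlim (fun r => r * d1 r) (Rbar_locally p_infty)
      (locally (- (beta1 - tau * beta2))) /\
    filterlim (fun r => r * d2 r) (Rbar_locally p_infty)
      (locally (- (beta2 - tau * beta1))).

Definition maxOn (v : R -> R) (a b : R) : R :=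
  real (Lub_Rbar (fun y => exists x, a <= x <= b /\ y = v x)).
Definition minOn (v : R -> R) (a b : R) : R :=
  real (Glb_Rbar (fun y => exists x, a <= x <= b /\ y = v x)).

From Stdlib Require Import Reals Lra Psatz.
From Coquelicot Require Import Coquelicot.
Open Scope R_scope.

(* With F1 = r^(2N+1) e^v1, F2 = r e^v2 and the fluxes w_i = r v_i', the system reads
   w1' = - F1 + tau F2 and w2' = - F2 + tau F1.  The Pohozaev-type quantity
     P = r F1 + r F2 + (w1^2 + w2^2 + 2 tau w1 w2) / (2 (1 - tau^2))
   has P' = (2N+2) F1 + 2 F2 and P(0+) = 0, so P <= (2N+2) beta1 + 2 beta2; letting r -> oo
   in the quadratic part gives beta1^2 - 2 tau beta1 beta2 + beta2^2 <= 4 (N+1) beta1 + 4 beta2,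
   hence beta1 + beta2 <= K := 8 (N+1) / (1 - tau).  Integrating w_i' from r to oo gives
   |r v_i'| <= K, so v_i oscillates by at most K (rho - 1) on [r0, rho r0]; and since
   v_i(s) >= v_i(r) - K on [r/2, r], the bound on the integral of F_i over [r/2, r] bounds
   v_i(r) + (k_i + 1) log r from above.  Together these give the estimate with gamma = 1/2. *)

Lemma MVT_pos (v d : R -> R) (s r : R) :
  (forall x, 0 < x -> is_derive v x (d x)) -> 0 < s <= r ->
  exists c, s <= c <= r /\ v r - v s = d c * (r - s).
Proof.
intros Hv Hsr.
destruct (MVT_gen v s r d) as [c [Hc Hvc]].
- intros x Hx. rewrite Rmin_left, Rmax_right in Hx by lra. apply Hv; lra.
- intros x Hx. rewrite Rmin_left, Rmax_right in Hx by lra.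
  apply continuity_pt_filterlim, (ex_derive_continuous (V:=R_NormedModule)).
  exists (d x). apply Hv; lra.
- rewrite Rmin_left, Rmax_right in Hc by lra. exists c. split; assumption.
Qed.

Lemma ex_RInt_pos (f : R -> R) (a b : R) :
  (forall x, 0 < x -> continuous f x) -> 0 < a <= b -> ex_RInt f a b.
Proof.
intros Hf Hab. apply (ex_RInt_continuous (V:=R_CompleteNormedModule)). intros x Hx.
rewrite Rmin_left, Rmax_right in Hx by lra. apply Hf; lra.
Qed.

Lemma is_RInt_derive_pos (P g : R -> R) (a b : R) :
  (forall x, 0 < x -> is_derive P x (g x)) -> (forall x, 0 < x -> continuous g x) ->
  0 < a <= b -> is_RInt g a b (P b - P a).
Proof.
intros HP Hg Hab. apply (is_RInt_derive P g); intros x Hx;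
  rewrite Rmin_left, Rmax_right in Hx by lra; [apply HP | apply Hg]; lra.
Qed.

Lemma RInt_le_is_RInt_gen (f : R -> R) (beta a b : R) :
  is_RInt_gen f (at_right 0) (Rbar_locally p_infty) beta ->
  (forall x, 0 < x -> 0 <= f x) -> (forall x, 0 < x -> continuous f x) ->
  0 < a <= b -> 0 <= RInt f a b <= beta.
Proof.
intros Hbeta Hpos Hcont Hab.
assert (Hge0 : forall x y, 0 < x <= y -> 0 <= RInt f x y)
  by (intros x y Hxy; apply RInt_ge_0; try lra; [apply ex_RInt_pos|intros; apply Hpos]; auto; lra).
split; [now apply Hge0|].
destruct (Rle_lt_dec (RInt f a b) beta) as [Hle|Hlt]; [exact Hle|exfalso].
assert (Heps : 0 < RInt f a b - beta) by lra.
assert (Hnear := Hbeta _ (locally_ball beta (mkposreal _ Heps))). unfold filtermapi in Hnear.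
assert (Hout : filter_prod (at_right 0) (Rbar_locally p_infty)
   (fun xy : R * R => 0 < fst xy < a /\ b < snd xy)).
{ apply Filter_prod with (fun x => 0 < x < a) (fun y => b < y).
  - exists (mkposreal _ (proj1 Hab)). intros y Hy Hy0.
    change (Rabs (y - 0) < a) in Hy. apply Rabs_def2 in Hy. simpl. lra.
  - exists b. auto.
  - intros x y Hx Hy. simpl. auto. }
destruct (filter_ex _ (filter_and _ _ Hnear Hout)) as [[x y] [[l [Hl Hball]] [Hx Hy]]].
simpl in *. change (Rabs (l - beta) < RInt f a b - beta) in Hball. apply Rabs_def2 in Hball.
assert (Hsplit : RInt f x y = RInt f x a + RInt f a b + RInt f b y).
{ rewrite <- (RInt_Chasles f x b y), <- (RInt_Chasles f x a b); try reflexivity;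
    apply ex_RInt_pos; auto; lra. }
rewrite (is_RInt_unique f x y l Hl) in Hsplit.
assert (0 <= RInt f x a) by (apply Hge0; lra).
assert (0 <= RInt f b y) by (apply Hge0; lra).
lra.
Qed.

Lemma filterlim_at_right_0_iff (f : R -> R) (L : R) :
  filterlim f (at_right 0) (locally L) <->
  forall eps, 0 < eps -> exists delta, 0 < delta /\
    forall x, 0 < x < delta -> Rabs (f x - L) < eps.
Proof.
rewrite filterlim_locally. split.
- intros H eps Heps. destruct (H (mkposreal eps Heps)) as [delta Hdelta].
  exists delta. split; [apply cond_pos|]. intros x Hx. apply Hdelta; [|lra].
  change (Rabs (x - 0) < delta). rewrite Rminus_0_r, Rabs_pos_eq; lra.
- intros H eps. destruct (H eps (cond_pos eps)) as [delta [Hdelta Hf]].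
  exists (mkposreal delta Hdelta). intros x Hx Hx0.
  change (Rabs (x - 0) < delta) in Hx. apply Rabs_def2 in Hx. apply Hf. simpl in Hx. lra.
Qed.

Lemma filterlim_mul_id_at_right_0 (f : R -> R) (M delta : R) :
  0 < delta -> (forall x, 0 < x < delta -> Rabs (f x) <= M) ->
  filterlim (fun x => x * f x) (at_right 0) (locally 0).
Proof.
intros Hdelta Hf. apply filterlim_at_right_0_iff. intros eps Heps.
exists (Rmin delta (eps / (Rabs M + 1))). split.
{ apply Rmin_pos; [lra|]. apply Rdiv_lt_0_compat; [lra|]. pose proof (Rabs_pos M); lra. }
intros x Hx.
assert (Hxd : x < delta) by (eapply Rlt_le_trans; [apply Hx | apply Rmin_l]).
assert (Hxe : x < eps / (Rabs M + 1)) by (eapply Rlt_le_trans; [apply Hx | apply Rmin_r]).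
assert (HM := Rle_abs M). pose proof (Rabs_pos M).
assert (x * (Rabs M + 1) < eps).
{ apply (Rmult_lt_compat_r (Rabs M + 1)) in Hxe; [|lra].
  unfold Rdiv in Hxe. rewrite Rmult_assoc, Rinv_l, Rmult_1_r in Hxe; lra. }
rewrite Rminus_0_r, Rabs_mult, Rabs_pos_eq by lra.
assert (Hfx := Hf x (conj (proj1 Hx) Hxd)). nra.
Qed.

Lemma filterlim_Rplus {T} (F : (T -> Prop) -> Prop) {FF : Filter F} (f g : T -> R) (a b : R) :
  filterlim f F (locally a) -> filterlim g F (locally b) ->
  filterlim (fun x => f x + g x) F (locally (a + b)).
Proof.
intros Hf Hg. apply (filterlim_comp_2 f g Rplus Hf Hg).
apply (filterlim_plus (K:=R_AbsRing) (V:=R_NormedModule) a b).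
Qed.

Lemma filterlim_Rmult {T} (F : (T -> Prop) -> Prop) {FF : Filter F} (f g : T -> R) (a b : R) :
  filterlim f F (locally a) -> filterlim g F (locally b) ->
  filterlim (fun x => f x * g x) F (locally (a * b)).
Proof.
intros Hf Hg. apply (filterlim_comp_2 f g Rmult Hf Hg).
apply (filterlim_mult (K:=R_AbsRing) a b).
Qed.

Lemma exp_le_exp (x y : R) : x <= y -> exp x <= exp y.
Proof. intros [Hlt | ->]; [left; apply exp_increasing, Hlt | right; reflexivity]. Qed.

Lemma flux_increment_bounds (w Fa Fb : R -> R) (tau ba bb r T : R) :
  (forall x, 0 < x -> is_derive w x (- Fa x + tau * Fb x)) ->
  (forall x, 0 < x -> continuous Fa x) -> (forall x, 0 < x -> continuous Fb x) ->
  (forall x, 0 < x -> 0 <= Fa x) -> (forall x, 0 < x -> 0 <= Fb x) ->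
  is_RInt_gen Fa (at_right 0) (Rbar_locally p_infty) ba ->
  is_RInt_gen Fb (at_right 0) (Rbar_locally p_infty) bb -> 0 <= tau -> 0 < r <= T ->
  w r - ba <= w T <= w r + tau * bb.
Proof.
intros Hw HFa HFb HFa0 HFb0 HIa HIb Htau HrT.
assert (Hint : is_RInt (fun x => - Fa x + tau * Fb x) r T (w T - w r)).
{ apply is_RInt_derive_pos; auto. intros x Hx.
  apply (continuous_plus (fun x => - Fa x) (fun x => tau * Fb x)).
  - apply (continuous_opp Fa), HFa, Hx.
  - apply (continuous_scal_r tau Fb), HFb, Hx. }
assert (Hlin : is_RInt (fun x => - Fa x + tau * Fb x) r T (- RInt Fa r T + tau * RInt Fb r T)).
{ apply (is_RInt_plus (fun x => - Fa x) (fun x => tau * Fb x)).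
  - apply (is_RInt_opp Fa), (RInt_correct Fa), ex_RInt_pos; auto.
  - apply (is_RInt_scal Fb), (RInt_correct Fb), ex_RInt_pos; auto. }
apply (is_RInt_unique (V:=R_CompleteNormedModule)) in Hint, Hlin. rewrite Hint in Hlin.
destruct (RInt_le_is_RInt_gen Fa ba r T) as [Ha0 Haba]; auto.
destruct (RInt_le_is_RInt_gen Fb bb r T) as [Hb0 Hbbb]; auto.
assert (0 <= tau * RInt Fb r T <= tau * bb) by (split; [apply Rmult_le_pos | apply Rmult_le_compat_l]; auto).
lra.
Qed.

Lemma flux_bounds (w Fa Fb : R -> R) (tau ba bb r : R) :
  (forall x, 0 < x -> is_derive w x (- Fa x + tau * Fb x)) ->
  (forall x, 0 < x -> continuous Fa x) -> (forall x, 0 < x -> continuous Fb x) ->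
  (forall x, 0 < x -> 0 <= Fa x) -> (forall x, 0 < x -> 0 <= Fb x) ->
  is_RInt_gen Fa (at_right 0) (Rbar_locally p_infty) ba ->
  is_RInt_gen Fb (at_right 0) (Rbar_locally p_infty) bb -> 0 <= tau ->
  filterlim w (Rbar_locally p_infty) (locally (- (ba - tau * bb))) -> 0 < r ->
  - ba <= w r <= tau * bb.
Proof.
intros Hw HFa HFb HFa0 HFb0 HIa HIb Htau Hlim Hr.
assert (Hinc := fun T (HT : r <= T) =>
  flux_increment_bounds w Fa Fb tau ba bb r T Hw HFa HFb HFa0 HFb0 HIa HIb Htau (conj Hr HT)).
split.
- assert (Rbar_le (- (ba - tau * bb)) (w r + tau * bb)); [|simpl in *; lra].
  apply (filterlim_le (F := Rbar_locally p_infty) w (fun _ => w r + tau * bb)); auto.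
  + exists r. intros T HT. apply Hinc. lra.
  + apply filterlim_const.
- assert (Rbar_le (w r - ba) (- (ba - tau * bb))); [|simpl in *; lra].
  apply (filterlim_le (F := Rbar_locally p_infty) (fun _ => w r - ba) w); auto.
  + exists r. intros T HT. apply Hinc. lra.
  + apply filterlim_const.
Qed.

Lemma Rabs_increment_le (v d : R -> R) (K s r : R) :
  (forall x, 0 < x -> is_derive v x (d x)) -> (forall x, 0 < x -> Rabs (x * d x) <= K) ->
  0 < s <= r -> Rabs (v r - v s) <= K * ((r - s) / s).
Proof.
intros Hv HK Hsr.
destruct (MVT_pos v d s r Hv Hsr) as [c [Hc ->]].
replace (d c * (r - s)) with ((c * d c) * ((r - s) / c)) by (field; lra).
rewrite Rabs_mult, (Rabs_pos_eq ((r - s) / c)) by (apply Rdiv_le_0_compat; lra).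
assert (HKc := HK c ltac:(lra)).
assert ((r - s) / c <= (r - s) / s)
  by (apply Rmult_le_compat_l; [lra | apply Rinv_le_contravar; lra]).
assert (0 <= (r - s) / c) by (apply Rdiv_le_0_compat; lra).
assert (0 <= Rabs (c * d c)) by apply Rabs_pos.
nra.
Qed.

Definition density (k : R) (v : R -> R) (x : R) : R := exp (k * ln x + v x).

Lemma density_pos (k : R) (v : R -> R) (x : R) : 0 < density k v x.
Proof. apply exp_pos. Qed.

Lemma density_nonneg (k : R) (v : R -> R) (x : R) : 0 <= density k v x.
Proof. apply Rlt_le, density_pos. Qed.

Lemma Rpower_mul_exp_density (k : R) (v : R -> R) (x : R) :
  Rpower x k * exp (v x) = density k v x.
Proof. unfold Rpower, density. rewrite exp_plus. reflexivity. Qed.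

Lemma mul_exp_density (v : R -> R) (x : R) : 0 < x -> x * exp (v x) = density 1 v x.
Proof. intros Hx. unfold density. rewrite exp_plus, Rmult_1_l, exp_ln; auto. Qed.

Lemma density_succ (k : R) (v : R -> R) (x : R) :
  0 < x -> density (k + 1) v x = x * density k v x.
Proof.
intros Hx. unfold density.
replace ((k + 1) * ln x + v x) with (ln x + (k * ln x + v x)) by ring.
rewrite exp_plus, exp_ln; auto.
Qed.

Lemma is_derive_density (k : R) (v d : R -> R) (x : R) :
  0 < x -> is_derive v x (d x) ->
  is_derive (density k v) x (density k v x * (k / x + d x)).
Proof.
intros Hx Hv. unfold density. auto_derive.
- repeat split; [exact Hx | exists (d x); exact Hv].
- replace (Derive (fun y => v y) x) with (d x) by (symmetry; apply is_derive_unique; exact Hv).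
  field. lra.
Qed.

Lemma continuous_density (k : R) (v d : R -> R) (x : R) :
  0 < x -> is_derive v x (d x) -> continuous (density k v) x.
Proof.
intros Hx Hv. apply (ex_derive_continuous (V:=R_NormedModule)).
eexists. apply (is_derive_density k v d x Hx Hv).
Qed.

Lemma density_bounded_at_0 (k : R) (v : R -> R) :
  0 <= k -> filterlim v (at_right 0) (locally (v 0)) ->
  exists delta, 0 < delta /\ forall x, 0 < x < delta -> density k v x <= exp (v 0 + 1).
Proof.
intros Hk Hv.
destruct (proj1 (filterlim_at_right_0_iff v (v 0)) Hv 1 Rlt_0_1) as [delta [Hdelta Hvx]].
exists (Rmin delta 1). split; [apply Rmin_pos; lra|]. intros x Hx.
assert (x < delta) by (eapply Rlt_le_trans; [apply Hx | apply Rmin_l]).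
assert (x < 1) by (eapply Rlt_le_trans; [apply Hx | apply Rmin_r]).
assert (Hvx' := Hvx x ltac:(lra)). apply Rabs_def2 in Hvx'.
assert (ln x < 0) by (rewrite <- ln_1; apply ln_increasing; lra).
assert (k * ln x <= 0) by (apply Rmult_le_0_l; lra).
unfold density. apply exp_le_exp. lra.
Qed.

Lemma density_succ_lim_0 (k : R) (v : R -> R) :
  0 <= k -> filterlim v (at_right 0) (locally (v 0)) ->
  filterlim (density (k + 1) v) (at_right 0) (locally 0).
Proof.
intros Hk Hv. destruct (density_bounded_at_0 k v Hk Hv) as [delta [Hdelta Hbound]].
apply (filterlim_ext_loc (fun x => x * density k v x)).
- exists (mkposreal 1 Rlt_0_1). intros x _ Hx. symmetry. apply density_succ, Hx.
- apply (filterlim_mul_id_at_right_0 _ (exp (v 0 + 1)) delta Hdelta).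
  intros x Hx. rewrite Rabs_pos_eq by apply density_nonneg. apply Hbound, Hx.
Qed.

(* The mean value theorem for v on [r/2, r] gives a point c where c v'(c) is controlled by the
   oscillation of v; the bound on the derivative of y v'(y) then transports this from c to r. *)
Lemma Rabs_flux_le (v d dw : R -> R) (M r : R) :
  (forall x, 0 < x -> is_derive v x (d x)) ->
  (forall x, 0 < x -> is_derive (fun y => y * d y) x (dw x)) ->
  (forall x, r / 2 <= x <= r -> Rabs (dw x) <= M) -> 0 < r ->
  Rabs (r * d r) <= 2 * Rabs (v r - v (r / 2)) + M * r.
Proof.
intros Hv Hw HM Hr.
destruct (MVT_pos v d (r / 2) r Hv ltac:(lra)) as [c [Hc Hvc]].
destruct (MVT_pos (fun y => y * d y) dw c r Hw ltac:(lra)) as [c' [Hc' Hwc]].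
assert (Hdc : Rabs (c * d c) <= 2 * Rabs (v r - v (r / 2))).
{ rewrite Hvc, !Rabs_mult, (Rabs_pos_eq c), (Rabs_pos_eq (r - r / 2)) by lra.
  pose proof (Rabs_pos (d c)). nra. }
assert (Hwr : Rabs (r * d r - c * d c) <= M * r).
{ rewrite Hwc, Rabs_mult, (Rabs_pos_eq (r - c)) by lra.
  assert (HMc := HM c' ltac:(lra)). pose proof (Rabs_pos (dw c')). nra. }
replace (r * d r) with ((r * d r - c * d c) + c * d c) by ring.
eapply Rle_trans; [apply Rabs_triang | lra].
Qed.

Lemma flux_lim_0 (v d dw : R -> R) (M delta : R) :
  0 < delta -> (forall x, 0 < x -> is_derive v x (d x)) ->
  (forall x, 0 < x -> is_derive (fun y => y * d y) x (dw x)) ->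
  (forall x, 0 < x < delta -> Rabs (dw x) <= M) ->
  filterlim v (at_right 0) (locally (v 0)) ->
  filterlim (fun x => x * d x) (at_right 0) (locally 0).
Proof.
intros Hdelta Hv Hw HM Hv0. apply filterlim_at_right_0_iff. intros eps Heps.
destruct (proj1 (filterlim_at_right_0_iff v (v 0)) Hv0 (eps / 8) ltac:(lra))
  as [delta1 [Hdelta1 Hv1]].
pose proof (Rabs_pos M) as HM0.
exists (Rmin (Rmin delta delta1) (eps / (2 * (Rabs M + 1)))). split.
{ apply Rmin_pos; [apply Rmin_pos|]; try lra. apply Rdiv_lt_0_compat; lra. }
intros r Hr.
assert (r < delta /\ r < delta1 /\ r < eps / (2 * (Rabs M + 1))) as [Hrd [Hrd1 Hre]].
{ pose proof (Rmin_l (Rmin delta delta1) (eps / (2 * (Rabs M + 1)))).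
  pose proof (Rmin_r (Rmin delta delta1) (eps / (2 * (Rabs M + 1)))).
  pose proof (Rmin_l delta delta1). pose proof (Rmin_r delta delta1). lra. }
assert (Hsmall : r * (Rabs M + 1) < eps / 2).
{ apply (Rmult_lt_compat_r (Rabs M + 1)) in Hre; [|lra].
  replace (eps / (2 * (Rabs M + 1)) * (Rabs M + 1)) with (eps / 2) in Hre by (field; lra).
  exact Hre. }
assert (Hosc : Rabs (v r - v (r / 2)) < eps / 4).
{ assert (H1 := Hv1 r ltac:(lra)). assert (H2 := Hv1 (r / 2) ltac:(lra)).
  apply Rabs_def2 in H1. apply Rabs_def2 in H2. apply Rabs_def1; lra. }
rewrite Rminus_0_r.
assert (Hflux := Rabs_flux_le v d dw M r Hv Hw ltac:(intros; apply HM; lra) ltac:(lra)).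
pose proof (Rle_abs M). nra.
Qed.

Lemma density_sup_bound (v : R -> R) (k K B beta r : R) :
  0 <= k -> 0 <= K -> (forall s t, 0 < s <= t -> Rabs (v t - v s) <= K * ((t - s) / s)) ->
  (forall x, 0 < x -> continuous (density k v) x) ->
  is_RInt_gen (density k v) (at_right 0) (Rbar_locally p_infty) beta -> beta <= B ->
  0 < r -> v r + (k + 1) * ln r <= K + ln B + (k + 1) * ln 2.
Proof.
intros Hk HK Hosc Hcont Hbeta HB Hr.
set (m := exp (k * ln (r / 2) + v r - K)).
assert (Hlow : forall s, r / 2 <= s <= r -> m <= density k v s).
{ intros s Hs. apply exp_le_exp.
  assert (k * ln (r / 2) <= k * ln s) by (apply Rmult_le_compat_l, ln_le; lra).
  assert (Hvs := Hosc s r ltac:(lra)). pose proof (Rle_abs (v r - v s)).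
  assert ((r - s) / s <= 1).
  { apply (Rmult_le_reg_r s); [lra|]. unfold Rdiv. rewrite Rmult_assoc, Rinv_l; lra. }
  assert (K * ((r - s) / s) <= K) by (rewrite <- (Rmult_1_r K) at 2; apply Rmult_le_compat_l; lra).
  lra. }
assert (Hint : (r - r / 2) * m <= beta).
{ replace ((r - r / 2) * m) with (RInt (fun _ => m) (r / 2) r) by (rewrite RInt_const; reflexivity).
  assert (Hle : RInt (density k v) (r / 2) r <= beta).
  { apply (RInt_le_is_RInt_gen (density k v) beta); auto; try lra.
    intros; apply density_nonneg. }
  eapply Rle_trans; [apply RInt_le | exact Hle]; try lra.
  - apply ex_RInt_const.
  - apply ex_RInt_pos; auto; lra.
  - intros; apply Hlow; lra. }
assert (Hm : (r - r / 2) * m = exp ((k + 1) * ln (r / 2) + v r - K)).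
{ unfold m. replace (r - r / 2) with (exp (ln (r / 2))) by (rewrite exp_ln; lra).
  rewrite <- exp_plus. f_equal. ring. }
assert (HlnB : (k + 1) * ln (r / 2) + v r - K <= ln B).
{ rewrite <- (ln_exp ((k + 1) * ln (r / 2) + v r - K)).
  apply ln_le; [apply exp_pos | lra]. }
rewrite ln_div in HlnB by lra. lra.
Qed.

Definition flux_energy (tau a b : R) : R :=
  (a * a + b * b + 2 * tau * a * b) / (2 * (1 - tau * tau)).

Lemma filterlim_flux_energy {T} (F : (T -> Prop) -> Prop) {FF : Filter F}
    (tau : R) (f g : T -> R) (a b : R) :
  filterlim f F (locally a) -> filterlim g F (locally b) ->
  filterlim (fun x => flux_energy tau (f x) (g x)) F (locally (flux_energy tau a b)).
Proof.
intros Hf Hg. unfold flux_energy, Rdiv.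
apply (filterlim_Rmult F (fun x => f x * f x + g x * g x + 2 * tau * f x * g x) (fun _ => _));
  [|apply filterlim_const].
repeat apply (filterlim_Rplus F); repeat apply (filterlim_Rmult F); auto; apply filterlim_const.
Qed.

Lemma flux_energy_asymptotic (tau b1 b2 : R) : -1 < tau < 1 ->
  flux_energy tau (- (b1 - tau * b2)) (- (b2 - tau * b1)) =
  (b1 * b1 - 2 * tau * b1 * b2 + b2 * b2) / 2.
Proof. intros Htau. unfold flux_energy. field. nra. Qed.

Lemma is_derive_flux_energy (tau : R) (f g : R -> R) (x df dg : R) :
  -1 < tau < 1 -> is_derive f x df -> is_derive g x dg ->
  is_derive (fun y => flux_energy tau (f y) (g y)) x
    ((f x * (df + tau * dg) + g x * (dg + tau * df)) / (1 - tau * tau)).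
Proof.
intros Htau Hf Hg. unfold flux_energy. auto_derive.
- repeat split; first [exists df; exact Hf | exists dg; exact Hg].
- replace (Derive (fun y => f y) x) with df by (symmetry; apply is_derive_unique; exact Hf).
  replace (Derive (fun y => g y) x) with dg by (symmetry; apply is_derive_unique; exact Hg).
  field. nra.
Qed.

Lemma sum_le_of_quadratic_le (tau c b1 b2 : R) :
  0 <= tau < 1 -> 0 <= c -> 0 <= b1 -> 0 <= b2 ->
  b1 * b1 - 2 * tau * b1 * b2 + b2 * b2 <= 2 * c * (b1 + b2) ->
  b1 + b2 <= 4 * c / (1 - tau).
Proof.
intros Htau Hc Hb1 Hb2 Hq.
assert (Hdom : (1 - tau) * ((b1 + b2) * (b1 + b2)) <= 4 * c * (b1 + b2)).
{ assert (0 <= (1 + tau) * ((b1 - b2) * (b1 - b2))).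
  { apply Rmult_le_pos; [lra | apply Rle_0_sqr]. }
  replace ((1 - tau) * ((b1 + b2) * (b1 + b2))) with
    (2 * (b1 * b1 - 2 * tau * b1 * b2 + b2 * b2) - (1 + tau) * ((b1 - b2) * (b1 - b2))) by ring.
  lra. }
apply (Rmult_le_reg_l (1 - tau)); [lra|].
replace ((1 - tau) * (4 * c / (1 - tau))) with (4 * c) by (field; lra).
destruct (Rle_lt_or_eq_dec 0 (b1 + b2) ltac:(lra)) as [Hpos | Hz]; [| rewrite <- Hz; lra].
apply (Rmult_le_reg_r _ _ _ Hpos). nra.
Qed.

Definition pohozaev (k1 k2 tau : R) (v1 v2 d1 d2 : R -> R) (x : R) : R :=
  density (k1 + 1) v1 x + density (k2 + 1) v2 x + flux_energy tau (x * d1 x) (x * d2 x).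

Section Pohozaev.

Variables (k1 k2 tau b1 b2 : R) (v1 v2 d1 d2 : R -> R).

Local Notation F1 := (density k1 v1).
Local Notation F2 := (density k2 v2).
Local Notation P := (pohozaev k1 k2 tau v1 v2 d1 d2).

Hypothesis Hk1 : 0 <= k1.
Hypothesis Hk2 : 0 <= k2.
Hypothesis Htau : 0 <= tau < 1.
Hypothesis Hv1 : forall x, 0 < x -> is_derive v1 x (d1 x).
Hypothesis Hv2 : forall x, 0 < x -> is_derive v2 x (d2 x).
Hypothesis Hw1 : forall x, 0 < x -> is_derive (fun y => y * d1 y) x (- F1 x + tau * F2 x).
Hypothesis Hw2 : forall x, 0 < x -> is_derive (fun y => y * d2 y) x (- F2 x + tau * F1 x).
Hypothesis Hv1_0 : filterlim v1 (at_right 0) (locally (v1 0)).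
Hypothesis Hv2_0 : filterlim v2 (at_right 0) (locally (v2 0)).
Hypothesis HI1 : is_RInt_gen F1 (at_right 0) (Rbar_locally p_infty) b1.
Hypothesis HI2 : is_RInt_gen F2 (at_right 0) (Rbar_locally p_infty) b2.
Hypothesis HL1 :
  filterlim (fun x => x * d1 x) (Rbar_locally p_infty) (locally (- (b1 - tau * b2))).
Hypothesis HL2 :
  filterlim (fun x => x * d2 x) (Rbar_locally p_infty) (locally (- (b2 - tau * b1))).

Let HF1 : forall x, 0 < x -> continuous F1 x :=
  fun x Hx => continuous_density k1 v1 d1 x Hx (Hv1 x Hx).
Let HF2 : forall x, 0 < x -> continuous F2 x :=
  fun x Hx => continuous_density k2 v2 d2 x Hx (Hv2 x Hx).
Let HF_nonneg : forall k v x, 0 < x -> 0 <= density k v x :=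
  fun k v x _ => density_nonneg k v x.

Lemma masses_nonneg : 0 <= b1 /\ 0 <= b2.
Proof.
split; [destruct (RInt_le_is_RInt_gen F1 b1 1 2) | destruct (RInt_le_is_RInt_gen F2 b2 1 2)];
  auto; lra.
Qed.

Lemma flux_bounded (x : R) : 0 < x ->
  Rabs (x * d1 x) <= b1 + b2 /\ Rabs (x * d2 x) <= b1 + b2.
Proof.
intros Hx. destruct masses_nonneg as [Hb1 Hb2].
destruct (flux_bounds (fun y => y * d1 y) F1 F2 tau b1 b2 x) as [Hl1 Hu1]; auto; try lra.
destruct (flux_bounds (fun y => y * d2 y) F2 F1 tau b2 b1 x) as [Hl2 Hu2]; auto; try lra.
split; apply Rabs_le; nra.
Qed.

Lemma is_derive_pohozaev (x : R) : 0 < x ->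
  is_derive P x ((k1 + 1) * F1 x + (k2 + 1) * F2 x).
Proof.
intros Hx.
assert (HE := is_derive_flux_energy tau (fun y => y * d1 y) (fun y => y * d2 y) x _ _
  ltac:(lra) (Hw1 x Hx) (Hw2 x Hx)).
assert (HD1 := is_derive_density (k1 + 1) v1 d1 x Hx (Hv1 x Hx)).
assert (HD2 := is_derive_density (k2 + 1) v2 d2 x Hx (Hv2 x Hx)).
apply (@eq_ind R _ (is_derive P x) (is_derive_plus _ _ _ _ _ (is_derive_plus _ _ _ _ _ HD1 HD2) HE)).
change plus with Rplus.
rewrite !density_succ by exact Hx. field. split; nra.
Qed.

Lemma pohozaev_lim_0 : filterlim P (at_right 0) (locally 0).
Proof.
destruct (density_bounded_at_0 k1 v1 Hk1 Hv1_0) as [delta1 [Hdelta1 HB1]].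
destruct (density_bounded_at_0 k2 v2 Hk2 Hv2_0) as [delta2 [Hdelta2 HB2]].
set (M := exp (v1 0 + 1) + exp (v2 0 + 1)).
assert (Hdelta : 0 < Rmin delta1 delta2) by (apply Rmin_pos; assumption).
assert (Hdw : forall x, 0 < x < Rmin delta1 delta2 ->
    Rabs (- F1 x + tau * F2 x) <= M /\ Rabs (- F2 x + tau * F1 x) <= M).
{ intros x Hx. pose proof (Rmin_l delta1 delta2). pose proof (Rmin_r delta1 delta2).
  assert (HB1x := HB1 x ltac:(lra)). assert (HB2x := HB2 x ltac:(lra)).
  pose proof (density_pos k1 v1 x). pose proof (density_pos k2 v2 x).
  unfold M. split; apply Rabs_le; nra. }
assert (Hw1_0 := flux_lim_0 v1 d1 _ M _ Hdelta Hv1 Hw1 (fun x Hx => proj1 (Hdw x Hx)) Hv1_0).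
assert (Hw2_0 := flux_lim_0 v2 d2 _ M _ Hdelta Hv2 Hw2 (fun x Hx => proj2 (Hdw x Hx)) Hv2_0).
assert (Hlim := filterlim_Rplus _ _ _ _ _
  (filterlim_Rplus _ _ _ _ _ (density_succ_lim_0 k1 v1 Hk1 Hv1_0) (density_succ_lim_0 k2 v2 Hk2 Hv2_0))
  (filterlim_flux_energy _ tau _ _ _ _ Hw1_0 Hw2_0)).
replace (0 + 0 + flux_energy tau 0 0) with 0 in Hlim by (unfold flux_energy; field; nra).
exact Hlim.
Qed.

Lemma pohozaev_le (T : R) : 0 < T -> P T <= (k1 + 1) * b1 + (k2 + 1) * b2.
Proof.
intros HT.
set (G := (k1 + 1) * b1 + (k2 + 1) * b2).
set (g := fun x => (k1 + 1) * F1 x + (k2 + 1) * F2 x).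
assert (Hg : is_RInt_gen g (at_right 0) (Rbar_locally p_infty) G).
{ exact (is_RInt_gen_plus _ _ _ _
    (is_RInt_gen_scal _ (k1 + 1) _ HI1) (is_RInt_gen_scal _ (k2 + 1) _ HI2)). }
assert (Hgc : forall x, 0 < x -> continuous g x).
{ intros x Hx. exact (continuous_plus _ _ x
    (continuous_scal_r (k1 + 1) F1 x (HF1 x Hx)) (continuous_scal_r (k2 + 1) F2 x (HF2 x Hx))). }
assert (Hinc : forall e, 0 < e <= T -> P T - P e <= G).
{ intros e He.
  rewrite <- (is_RInt_unique (V:=R_CompleteNormedModule) g e T (P T - P e))
    by exact (is_RInt_derive_pos P g e T is_derive_pohozaev Hgc He).
  apply (RInt_le_is_RInt_gen g G); auto.
  intros x Hx. pose proof (density_nonneg k1 v1 x). pose proof (density_nonneg k2 v2 x).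
  unfold g. nra. }
assert (Rbar_le (P T - G) 0); [|simpl in *; lra].
apply (filterlim_le (F := at_right 0) (fun _ => P T - G) P).
- exists (mkposreal T HT). intros e He He0.
  change (Rabs (e - 0) < T) in He. apply Rabs_def2 in He.
  assert (Hinc' := Hinc e ltac:(lra)). lra.
- apply filterlim_const.
- exact pohozaev_lim_0.
Qed.

Lemma masses_quadratic_bound :
  b1 * b1 - 2 * tau * b1 * b2 + b2 * b2 <= 2 * ((k1 + 1) * b1 + (k2 + 1) * b2).
Proof.
assert (Hlim := filterlim_flux_energy (Rbar_locally p_infty) tau _ _ _ _ HL1 HL2).
rewrite flux_energy_asymptotic in Hlim by lra.
assert (Rbar_le ((b1 * b1 - 2 * tau * b1 * b2 + b2 * b2) / 2) ((k1 + 1) * b1 + (k2 + 1) * b2));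
  [|simpl in *; lra].
apply (filterlim_le (F := Rbar_locally p_infty)
  (fun x => flux_energy tau (x * d1 x) (x * d2 x)) (fun _ => (k1 + 1) * b1 + (k2 + 1) * b2)).
- exists 0. intros x Hx. apply (Rle_trans _ (P x)); [|apply pohozaev_le; lra].
  unfold pohozaev. pose proof (density_pos (k1 + 1) v1 x). pose proof (density_pos (k2 + 1) v2 x).
  lra.
- exact Hlim.
- apply filterlim_const.
Qed.

End Pohozaev.

Lemma is_derive_flux (d dd : R -> R) (x : R) :
  is_derive d x (dd x) -> is_derive (fun y => y * d y) x (d x + x * dd x).
Proof.
intros Hd. auto_derive.
- exists (dd x). exact Hd.
- replace (Derive (fun y => d y) x) with (dd x) by (symmetry; apply is_derive_unique; exact Hd).
  ring.
Qed.

Lemma is_RInt_gen_ext_pos (f g : R -> R) (beta : R) :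
  (forall x, 0 < x -> f x = g x) ->
  is_RInt_gen f (at_right 0) (Rbar_locally p_infty) beta ->
  is_RInt_gen g (at_right 0) (Rbar_locally p_infty) beta.
Proof.
intros Hfg. apply is_RInt_gen_ext.
apply Filter_prod with (fun x => 0 < x) (fun y => 0 < y).
- exists (mkposreal 1 Rlt_0_1). intros x _ Hx. exact Hx.
- exists 0. auto.
- intros x y Hx Hy z Hz. apply Hfg. simpl in Hz.
  pose proof (Rmin_glb_lt x y 0 Hx Hy). lra.
Qed.

Lemma radial_solution_density_form (N tau : R) (v1 v2 : R -> R) :
  radial_solution N tau v1 v2 ->
  exists (d1 d2 : R -> R) (b1 b2 : R),
    filterlim v1 (at_right 0) (locally (v1 0)) /\
    filterlim v2 (at_right 0) (locally (v2 0)) /\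
    (forall x, 0 < x -> is_derive v1 x (d1 x)) /\
    (forall x, 0 < x -> is_derive v2 x (d2 x)) /\
    (forall x, 0 < x -> is_derive (fun y => y * d1 y) x
       (- density (2 * N + 1) v1 x + tau * density 1 v2 x)) /\
    (forall x, 0 < x -> is_derive (fun y => y * d2 y) x
       (- density 1 v2 x + tau * density (2 * N + 1) v1 x)) /\
    is_RInt_gen (density (2 * N + 1) v1) (at_right 0) (Rbar_locally p_infty) b1 /\
    is_RInt_gen (density 1 v2) (at_right 0) (Rbar_locally p_infty) b2 /\
    filterlim (fun x => x * d1 x) (Rbar_locally p_infty) (locally (- (b1 - tau * b2))) /\
    filterlim (fun x => x * d2 x) (Rbar_locally p_infty) (locally (- (b2 - tau * b1))).
Proof.
intros [[Hv1_0 _] [[Hv2_0 _] [d1 [dd1 [d2 [dd2 [b1 [b2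
  [HC1 [HC2 [Heq1 [Heq2 [_ [_ [HI1 [HI2 [HL1 HL2]]]]]]]]]]]]]]]]].
assert (HF1 : forall x, 0 < x -> Rpower x (2 * N + 1) * exp (v1 x) = density (2 * N + 1) v1 x)
  by (intros; apply Rpower_mul_exp_density).
assert (HF2 : forall x, 0 < x -> x * exp (v2 x) = density 1 v2 x)
  by (intros; apply mul_exp_density; assumption).
assert (Hflux1 : forall x, 0 < x ->
    d1 x + x * dd1 x = - density (2 * N + 1) v1 x + tau * density 1 v2 x).
{ intros x Hx. rewrite <- HF1, <- HF2 by exact Hx. specialize (Heq1 x Hx). lra. }
assert (Hflux2 : forall x, 0 < x ->
    d2 x + x * dd2 x = - density 1 v2 x + tau * density (2 * N + 1) v1 x).
{ intros x Hx. rewrite <- HF1, <- HF2 by exact Hx. specialize (Heq2 x Hx). lra. }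
exists d1, d2, b1, b2.
repeat apply conj; auto.
- intros x Hx. apply HC1, Hx.
- intros x Hx. apply HC2, Hx.
- intros x Hx. rewrite <- Hflux1 by exact Hx. apply is_derive_flux, HC1, Hx.
- intros x Hx. rewrite <- Hflux2 by exact Hx. apply is_derive_flux, HC2, Hx.
- exact (is_RInt_gen_ext_pos _ _ b1 HF1 HI1).
- exact (is_RInt_gen_ext_pos _ _ b2 HF2 HI2).
Qed.

Definition mass_bound (N tau : R) : R := 8 * (N + 1) / (1 - tau).

Lemma radial_solution_estimates (N tau : R) (v1 v2 : R -> R) :
  0 < N -> 0 < tau < 1 -> radial_solution N tau v1 v2 ->
  (forall s r, 0 < s <= r -> Rabs (v1 r - v1 s) <= mass_bound N tau * ((r - s) / s)) /\
  (forall s r, 0 < s <= r -> Rabs (v2 r - v2 s) <= mass_bound N tau * ((r - s) / s)) /\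
  (forall r, 0 < r -> v1 r + (2 * N + 2) * ln r <=
     mass_bound N tau + ln (mass_bound N tau) + (2 * N + 2) * ln 2) /\
  (forall r, 0 < r -> v2 r + 2 * ln r <=
     mass_bound N tau + ln (mass_bound N tau) + 2 * ln 2).
Proof.
intros HN Htau Hsol.
destruct (radial_solution_density_form N tau v1 v2 Hsol) as [d1 [d2 [b1 [b2
  [Hv1_0 [Hv2_0 [Hv1 [Hv2 [Hw1 [Hw2 [HI1 [HI2 [HL1 HL2]]]]]]]]]]]]].
set (K := mass_bound N tau).
assert (Hk1 : 0 <= 2 * N + 1) by lra.
assert (Hk2 : 0 <= 1) by lra.
assert (Htau' : 0 <= tau < 1) by lra.
assert (Hmass : 0 <= b1 /\ 0 <= b2)
  by (apply (masses_nonneg (2 * N + 1) 1 b1 b2 v1 v2 d1 d2); assumption).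
assert (Hsum : b1 + b2 <= K).
{ unfold K, mass_bound. replace (8 * (N + 1)) with (4 * (2 * (N + 1))) by ring.
  apply sum_le_of_quadratic_le; try lra.
  assert (b1 * b1 - 2 * tau * b1 * b2 + b2 * b2 <= 2 * ((2 * N + 1 + 1) * b1 + (1 + 1) * b2))
    by (apply (masses_quadratic_bound (2 * N + 1) 1 tau b1 b2 v1 v2 d1 d2); assumption).
  nra. }
assert (HK : 0 < K) by (unfold K, mass_bound; apply Rdiv_lt_0_compat; lra).
assert (Hflux : forall x, 0 < x -> Rabs (x * d1 x) <= K /\ Rabs (x * d2 x) <= K).
{ intros x Hx.
  destruct (flux_bounded (2 * N + 1) 1 tau b1 b2 v1 v2 d1 d2 Htau' Hv1 Hv2 Hw1 Hw2
    HI1 HI2 HL1 HL2 x Hx). lra. }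
assert (Hosc1 : forall s r, 0 < s <= r -> Rabs (v1 r - v1 s) <= K * ((r - s) / s))
  by (intros; apply (Rabs_increment_le v1 d1); auto; apply Hflux).
assert (Hosc2 : forall s r, 0 < s <= r -> Rabs (v2 r - v2 s) <= K * ((r - s) / s))
  by (intros; apply (Rabs_increment_le v2 d2); auto; apply Hflux).
repeat apply conj; auto; intros r Hr.
- replace (2 * N + 2) with (2 * N + 1 + 1) by ring.
  apply (density_sup_bound v1 (2 * N + 1) K K b1); auto; try lra.
  intros x Hx. apply (continuous_density _ v1 d1 x Hx), Hv1, Hx.
- replace (2 * ln r) with ((1 + 1) * ln r) by ring.
  replace (2 * ln 2) with ((1 + 1) * ln 2) by ring.
  apply (density_sup_bound v2 1 K K b2); auto; try lra.
  intros x Hx. apply (continuous_density _ v2 d2 x Hx), Hv2, Hx.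
Qed.

Lemma maxOn_minOn_oscillation (v : R -> R) (a b D : R) :
  a <= b -> (forall x y, a <= x <= b -> a <= y <= b -> v x <= v y + D) ->
  maxOn v a b <= minOn v a b + D /\ minOn v a b <= v a.
Proof.
intros Hab Hosc. unfold maxOn, minOn.
set (S := fun y => exists x, a <= x <= b /\ y = v x).
assert (Ha : a <= a <= b) by lra.
destruct (Glb_Rbar_correct S) as [Hlb Hglb].
destruct (Lub_Rbar_correct S) as [Hub Hlub].
assert (Hm_le : Rbar_le (Glb_Rbar S) (v a)) by (apply Hlb; exists a; auto).
assert (Hm_ge : forall x, a <= x <= b -> Rbar_le (v x - D) (Glb_Rbar S)).
{ intros x Hx. apply Hglb. intros y [z [Hz ->]]. simpl. specialize (Hosc x z Hx Hz). lra. }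
destruct (Glb_Rbar S) as [m | |]; simpl in Hm_le; try contradiction;
  [| specialize (Hm_ge a Ha); contradiction].
assert (Hl_le : Rbar_le (Lub_Rbar S) (m + D)).
{ apply Hlub. intros y [z [Hz ->]]. specialize (Hm_ge z Hz). simpl in *. lra. }
assert (Hl_ge : Rbar_le (v a) (Lub_Rbar S)) by (apply Hub; exists a; auto).
destruct (Lub_Rbar S) as [l | |]; simpl in Hl_le, Hl_ge; try contradiction.
simpl. lra.
Qed.

Lemma maxOn_le_half_minOn (v : R -> R) (K C q r0 rho : R) :
  0 <= K -> (forall s r, 0 < s <= r -> Rabs (v r - v s) <= K * ((r - s) / s)) ->
  (forall r, 0 < r -> v r + q * ln r <= C) -> 0 < r0 -> 1 < rho ->
  maxOn v r0 (rho * r0) <=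
    1 / 2 * minOn v r0 (rho * r0) + q * (1 / 2 - 1) * ln r0 + (C / 2 + K * (rho - 1)).
Proof.
intros HK Hosc HC Hr0 Hrho.
assert (Hinc : forall s r, r0 <= s <= r -> r <= rho * r0 -> Rabs (v r - v s) <= K * (rho - 1)).
{ intros s r Hs Hr. eapply Rle_trans; [apply Hosc; lra|].
  apply Rmult_le_compat_l; [exact HK|].
  apply (Rmult_le_reg_r s); [lra|]. unfold Rdiv. rewrite Rmult_assoc, Rinv_l by lra. nra. }
destruct (maxOn_minOn_oscillation v r0 (rho * r0) (K * (rho - 1))) as [Hmax Hmin]; [nra| |].
- intros x y Hx Hy. destruct (Rle_lt_dec x y) as [Hxy | Hyx].
  + assert (H := Hinc x y ltac:(lra) ltac:(lra)). rewrite Rabs_minus_sym in H.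
    pose proof (Rle_abs (v x - v y)). lra.
  + assert (H := Hinc y x ltac:(lra) ltac:(lra)). pose proof (Rle_abs (v x - v y)). lra.
- assert (HCr0 := HC r0 Hr0). lra.
Qed.

Theorem mainTheorem11 :
  forall rho : R, 1 < rho ->
  exists gamma : R, 0 < gamma < 1 /\
  forall N tau : R, 0 < N -> 0 < tau < 1 ->
  exists C0 : R, 0 < C0 /\
  forall v1 v2 : R -> R, radial_solution N tau v1 v2 ->
  forall r0 R0 : R, 0 < r0 -> R0 = rho * r0 ->
    maxOn v1 r0 R0 <= gamma * minOn v1 r0 R0 + 2 * (N + 1) * (gamma - 1) * ln r0 + C0 /\
    maxOn v2 r0 R0 <= gamma * minOn v2 r0 R0 + 2 * (gamma - 1) * ln r0 + C0.
Proof.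
intros rho Hrho. exists (1 / 2). split; [lra|].
intros N tau HN Htau.
set (K := mass_bound N tau).
assert (HK : 0 < K) by (unfold K, mass_bound; apply Rdiv_lt_0_compat; lra).
set (C1 := K + ln K + (2 * N + 2) * ln 2).
set (C2 := K + ln K + 2 * ln 2).
pose proof (Rle_abs C1). pose proof (Rle_abs C2).
pose proof (Rabs_pos C1). pose proof (Rabs_pos C2).
assert (0 <= K * (rho - 1)) by (apply Rmult_le_pos; lra).
exists ((Rabs C1 + Rabs C2) / 2 + K * (rho - 1) + 1). split; [lra|].
intros v1 v2 Hsol r0 R0 Hr0 ->.
destruct (radial_solution_estimates N tau v1 v2 HN Htau Hsol)
  as [Hosc1 [Hosc2 [Hsup1 Hsup2]]].
pose proof (maxOn_le_half_minOn v1 K C1 (2 * N + 2) r0 rho ltac:(lra) Hosc1 Hsup1 Hr0 Hrho).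
pose proof (maxOn_le_half_minOn v2 K C2 2 r0 rho ltac:(lra) Hosc2 Hsup2 Hr0 Hrho).
split; lra.
Qed.
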